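(* For all positive integers $r,s,k$ with $1\le r,s\le k$, $$\sum_{n\ge0}\mathrm{GF}\big(\mathcal A_{2n+1}^{(k)}(r\to s);w_{AV}\big)x^{2n}=\begin{cases}(-1)^{r+s+1}V_rV_s\dfrac{xQ_{2r-2}(x)\,T_{AV}^{s-1}R_{AV}^{(k-s+1)}Q_{2k+1-2s}(x)}{Q_{2k}(x)},&r<s,\\[2mm] V_r-V_r^2\dfrac{xQ_{2r-2}(x)\,T_{AV}^{r-1}R_{AV}^{(k-r+1)}Q_{2k+1-2r}(x)}{Q_{2k}(x)},&r=s,\\[2mm] (-1)^{r+s+1}V_rV_s\dfrac{xQ_{2s-2}(x)\,T_{AV}^{r-1}R_{AV}^{(k-r+1)}Q_{2k+1-2r}(x)}{Q_{2k}(x)},&r>s,\end{cases}$$ and $$\sum_{n\ge0}\mathrm{GF}\big(\mathcal A_{2n+2}^{(k)}(r\to s);w_{AV}\big)x^{2n+1}=\begin{cases}(-1)^{r+s+1}V_rA_s\dfrac{xQ_{2r-2}(x)\,T_{AV}^{s}Q_{2k-2s}(x)}{Q_{2k}(x)},&r\le s,\\[2mm] (-1)^{r+s+1}V_rA_s\dfrac{xQ_{2s-1}(x)\,T_{AV}^{r-1}R_{AV}^{(k-r+1)}Q_{2k+1-2r}(x)}{Q_{2k}(x)},&r>s.\end{cases}$$ Here $T_{AV}^{a}R_{AV}^{(b)}Q(x)$ means: first apply $R_{AV}^{(b)}$ to $Q(x)$, then apply $T_{AV}^{a}$.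
   Context: $\mathcal A_n^{(k)}(r\to s)$ is the set of integer sequences $(a_1,\dots,a_n)$ with $a_1=r$, $a_n=s$, $1\le a_i\le k$, and $a_1\le a_2\ge a_3\le a_4\ge\cdots$ (i.e. $a_{2j-1}\le a_{2j}$, $a_{2j}\ge a_{2j+1}$ whenever defined). Let $A_1,A_2,\dots,V_1,V_2,\dots$ be indeterminates; the weight of a sequence is $w_{AV}(a_1,\dots,a_n)=\prod_{i=1}^{\lfloor n/2\rfloor}A_{a_{2i}}\prod_{i=1}^{\lceil n/2\rceil}V_{a_{2i-1}}$, and $\mathrm{GF}(\mathcal O;w)=\sum_{t\in\mathcal O}w(t)$. Polynomials $Q_n(x)$: $Q_0=1$, $Q_1=V_1x$, and for $n\ge1$, $Q_{n+1}(x)=V_{(n+2)/2}\,xQ_n(x)-Q_{n-1}(x)$ if $n$ is even, $Q_{n+1}(x)=A_{(n+1)/2}\,xQ_n(x)-Q_{n-1}(x)$ if $n$ is odd. $T_{AV}$ replaces each $A_i$ by $A_{i+1}$ and each $V_i$ by $V_{i+1}$; $R_{AV}^{(j)}$ replaces each $A_i$ by $V_{j+1-i}$ and each $V_i$ by $A_{j+1-i}$. *)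

From HB Require Import structures.
From mathcomp Require Import all_boot all_order all_algebra.
Set Implicit Arguments. Unset Strict Implicit. Unset Printing Implicit Defensive.
Import Order.TTheory GRing.Theory Num.Theory.
Local Open Scope ring_scope.

(* The indeterminates A_1, A_2, ..., V_1, V_2, ... are modelled by arbitrary
   values A i, V i (i >= 1; index 0 is never used) in an arbitrary
   commutative ring R.  Everything below is a polynomial expression in them,
   so an identity for all R, A, V is the same as the identity over the
   polynomial ring in the indeterminates. *)

Section Defs.
Variable R : comRingType.

(* 1-indexed access a_i of a sequence a = (a_1, ..., a_n). *)
Definition aidx (a : seq nat) (i : nat) : nat := nth 0%N a i.-1.

Definition alt_seq (k r s n : nat) (a : seq nat) : bool :=
  [&& size a == n, aidx a 1 == r, aidx a n == s,
      all (fun x => (1 <= x <= k)%N) a &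
      all (fun i => if odd i then (aidx a i <= aidx a i.+1)%N
                    else (aidx a i.+1 <= aidx a i)%N) (iota 1 n.-1)].

Definition wAV (A V : nat -> R) (n : nat) (a : seq nat) : R :=
  (\prod_(1 <= i < (n./2).+1) A (aidx a (2 * i)%N)) *
  (\prod_(1 <= i < (uphalf n).+1) V (aidx a (2 * i - 1)%N)).

(* GF(A_n^{(k)}(r -> s); w_AV): the sequences are enumerated as n-tuples
   with entries in {0..k} (entries 0 being excluded by alt_seq). *)
Definition GFA (A V : nat -> R) (k r s n : nat) : R :=
  \sum_(t : n.-tuple 'I_k.+1 | alt_seq k r s n (map val t)) wAV A V n (map val t).

(* coefficient in the recursion: Q_{m+1} = c_m x Q_m - Q_{m-1} *)
Definition Qcoef (A V : nat -> R) (m : nat) : R :=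
  if ~~ odd m then V (m.+2./2) else A (m.+1./2).

(* Qpair n = (Q_n, Q_{n+1}) *)
Fixpoint Qpair (A V : nat -> R) (n : nat) : {poly R} * {poly R} :=
  match n with
  | 0%N => (1, (V 1%N)%:P * 'X)
  | n'.+1 => let: (q0, q1) := Qpair A V n' in
             (q1, (Qcoef A V n'.+1)%:P * 'X * q1 - q0)
  end.

Definition Qpoly (A V : nat -> R) (n : nat) : {poly R} := (Qpair A V n).1.

(* A "polynomial in the indeterminates" is a function of their values. *)
Definition AVpoly := (nat -> R) -> (nat -> R) -> {poly R}.

Definition TAV (f : AVpoly) : AVpoly :=
  fun A V => f (fun i => A i.+1) (fun i => V i.+1).

Definition RAV (j : nat) (f : AVpoly) : AVpoly :=
  fun A V => f (fun i => V (j.+1 - i)%N) (fun i => A (j.+1 - i)%N).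

Definition Qn (n : nat) : AVpoly := fun A V => Qpoly A V n.

Definition TRQ (a b m : nat) (A V : nat -> R) : {poly R} :=
  iter a TAV (RAV b (Qn m)) A V.

Definition TQ (a m : nat) (A V : nat -> R) : {poly R} :=
  iter a TAV (Qn m) A V.

(* Formal power series identity  F(x) = N(x) / D(x), where D(0) is a unit
   (here D = Q_{2k}, D(0) = (-1)^k), stated as D(x) F(x) = N(x)
   coefficientwise; F is given by its coefficient sequence. *)
Definition ps_eq_div (F : nat -> R) (N D : {poly R}) : Prop :=
  forall m : nat, \sum_(i < m.+1) D`_i * F (m - i)%N = N`_m.

End Defs.

From HB Require Import structures.
From mathcomp Require Import all_boot all_order all_algebra.
From mathcomp Require Import zify ring.
Import Order.TTheory GRing.Theory Num.Theory.
Local Open Scope ring_scope.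
Set Implicit Arguments. Unset Strict Implicit. Unset Printing Implicit Defensive.

(* Let g be the coefficient sequence of the recursion of Q (Qcoef), so that
   Q_n = K_(n+1)(g), where K is the continuant: K_0 = 0, K_1 = 1,
   K_(n+2)(c) = c_n x K_(n+1)(c) - K_n(c).  T_AV shifts g by two places and
   R_AV^(j) reverses it, so every polynomial in the statement is a continuant
   of a shifted piece of g (TQ_continuant, TRQ_continuant, using the split
   and reversal identities of continuants).

   Removing the last entry of an alternating sequence gives transfer
   equations for the series F_u (odd length, ending at u) and G_u (even
   length):  F_u(m+1) = V_u sum_(v >= u) G_v(m)  and
   G_u(m+1) = A_u sum_(1 <= v <= u) F_v(m)  (series_odd_succ,
   series_even_succ).  The claimed numerators satisfy the same equations up
   to the initial term: their partial sums have closed forms obtained from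
   the continuant identities (num_odd_prefix_sum, num_even_suffix_sum),
   whence  N^odd_w = [w = r] V_r D + V_w x S^even_w  and
   N^even_v = A_v x S^odd_v  with D = Q_(2k).  An induction on the
   coefficient index then proves D F_u = N^odd_u and D G_u = N^even_u for
   all u at once (series_numerators), which is the theorem. *)

Section Continuants.
Variable R : comNzRingType.
Implicit Types (c d : nat -> R) (n : nat).

Fixpoint continuant c n : {poly R} :=
  match n with
  | 0%N => 0
  | n1.+1 => match n1 with
             | 0%N => 1
             | n2.+1 => (c n2)%:P * 'X * continuant c n1 - continuant c n2
             end
  end.

Lemma continuantSS c n :
  continuant c n.+2 = (c n)%:P * 'X * continuant c n.+1 - continuant c n.
Proof. by []. Qed.

Lemma continuant_ext c d n :
  (forall t, (t < n)%N -> c t = d t) -> continuant c n = continuant d n.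
Proof.
elim: n {-2}n (leqnn n) => [|n IH] [|[|m]] // Hm Hcd.
rewrite !continuantSS Hcd; last by lia.
by congr (_ * _ - _); apply: IH => [|t Ht]; rewrite ?Hcd //; lia.
Qed.

Definition shift c i : nat -> R := fun t => c (i + t)%N.

Lemma continuant_split c a b :
  continuant c (a + b).+1
  = continuant c a.+1 * continuant (shift c a) b.+1
    - continuant c a * continuant (shift c a.+1) b.
Proof.
suff [] : continuant c (a + b).+1
     = continuant c a.+1 * continuant (shift c a) b.+1
       - continuant c a * continuant (shift c a.+1) b
  /\ continuant c (a + b).+2
     = continuant c a.+1 * continuant (shift c a) b.+2
       - continuant c a * continuant (shift c a.+1) b.+1 by [].
elim: b => [|b [IH1 IH2]].
  by rewrite addn0 /= /shift addn0; split; ring.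
split; first by rewrite addnS.
rewrite addnS continuantSS IH2 IH1 [continuant (shift c a) b.+3]continuantSS.
rewrite [continuant (shift c a.+1) b.+2]continuantSS /shift addnS addSn; ring.
Qed.

Lemma continuant_shift_first c i n :
  continuant (shift c i) n.+2
  = (c i)%:P * 'X * continuant (shift c i.+1) n.+1 - continuant (shift c i.+2) n.
Proof.
have -> : n.+2 = (1 + n).+1 by [].
rewrite continuant_split.
have -> : continuant (shift (shift c i) 1) n.+1 = continuant (shift c i.+1) n.+1.
  by apply: continuant_ext => t _; rewrite /shift addnA addn1.
have -> : continuant (shift (shift c i) 2) n = continuant (shift c i.+2) n.
  by apply: continuant_ext => t _; rewrite /shift addnA addn2.
rewrite /= /shift addn0; ring.
Qed.

Lemma continuant_rev n c d :
  (forall t, (t < n)%N -> d t = c (n.-1 - t)%N) ->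
  continuant d n.+1 = continuant c n.+1.
Proof.
elim/ltn_ind: n c d => -[|[|n]] IH c d Hdc //.
  by rewrite /= Hdc.
(* view c as its own 0-shift, to expand it along its first coefficient *)
have -> : c = shift c 0 by [].
have E1 : continuant d n.+2 = continuant (shift c 1) n.+2.
  by apply: IH => // t Ht; rewrite Hdc /shift; [congr c|]; lia.
have E2 : continuant d n.+1 = continuant (shift c 2) n.+1.
  by apply: IH => // t Ht; rewrite Hdc /shift; [congr c|]; lia.
rewrite continuantSS continuant_shift_first E1 E2 Hdc //.
by rewrite subnn.
Qed.

End Continuants.

Section QAsContinuant.
Variable R : comNzRingType.
Implicit Types A V : nat -> R.

Lemma Qpoly_continuant A V n : Qpoly A V n = continuant (Qcoef A V) n.+1.
Proof.
rewrite /Qpoly.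
suff -> : Qpair A V n = (continuant (Qcoef A V) n.+1, continuant (Qcoef A V) n.+2) by [].
by elim: n => [|n /= ->] /=; rewrite ?mulr1 ?subr0.
Qed.

Lemma iter_TAV (f : AVpoly R) a A V :
  iter a (@TAV R) f A V = f (fun i => A (a + i)%N) (fun i => V (a + i)%N).
Proof. by elim: a A V => [|a IH] A V //=; rewrite /TAV IH. Qed.

Lemma TQ_continuant A V a m :
  TQ a m A V = continuant (shift (Qcoef A V) (2 * a)) m.+1.
Proof.
rewrite /TQ iter_TAV /Qn Qpoly_continuant; apply: continuant_ext => t _.
rewrite /Qcoef /shift oddD oddM /=.
by case: (odd t) => /=; congr (_ _); lia.
Qed.

Lemma TRQ_continuant A V k r : (1 <= r <= k)%N ->
  TRQ (r - 1) (k - r + 1) (2 * k + 1 - 2 * r) A V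
  = continuant (shift (Qcoef A V) (2 * r - 1)) (2 * k + 2 - 2 * r).
Proof.
move=> Hr.
have -> : (2 * k + 2 - 2 * r = (2 * k + 1 - 2 * r).+1)%N by lia.
rewrite /TRQ iter_TAV /RAV /Qn Qpoly_continuant.
rewrite (@continuant_ext _ _ (fun t => Qcoef A V (2 * k - 1 - t))) => [|t Ht].
  by apply: continuant_rev => t Ht; rewrite /shift; congr (Qcoef A V); lia.
have Hodd : odd (2 * k - 1 - t) = ~~ odd t.
  by rewrite !oddB ?oddM //=; lia.
by rewrite /Qcoef Hodd; case: (boolP (odd t)) => /= ?; congr (_ _); lia.
Qed.

Lemma Qcoef_even A V v : Qcoef A V (2 * v) = V v.+1.
Proof. by rewrite /Qcoef oddM /=; congr V; lia. Qed.

Lemma Qcoef_odd A V v : Qcoef A V (2 * v).+1 = A v.+1.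
Proof. by rewrite /Qcoef /= oddM /=; congr A; lia. Qed.

End QAsContinuant.

Section Numerators.
Variable R : comNzRingType.
Variables (A V : nat -> R) (k r : nat).
Hypothesis Hr : (1 <= r <= k)%N.

Local Notation g := (Qcoef A V).
Local Notation K i n := (continuant (shift g i) n).
Local Notation D := (continuant g (2 * k).+1).
Local Notation Ktail := (K (2 * r - 1) (2 * k + 2 - 2 * r)).

Definition num_odd s : {poly R} :=
  if (r < s)%N then
    ((-1) ^+ (r + s + 1) * V r * V s)%:P * 'X * continuant g (2 * r - 1)
      * K (2 * s - 1) (2 * k + 2 - 2 * s)
  else if r == s then
    (V r)%:P * D - (V r ^+ 2)%:P * 'X * continuant g (2 * r - 1) * Ktail
  else ((-1) ^+ (r + s + 1) * V r * V s)%:P * 'X * continuant g (2 * s - 1) * Ktail.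

Definition num_even s : {poly R} :=
  if (r <= s)%N then
    ((-1) ^+ (r + s + 1) * V r * A s)%:P * 'X * continuant g (2 * r - 1)
      * K (2 * s) (2 * k - 2 * s).+1
  else ((-1) ^+ (r + s + 1) * V r * A s)%:P * 'X * continuant g (2 * s) * Ktail.

Definition num_odd_prefix v : {poly R} :=
  ((-1) ^+ (r + v + 1) * V r)%:P *
  (if (v < r)%N then continuant g (2 * v) * Ktail
   else continuant g (2 * r - 1) * K (2 * v) (2 * k + 1 - 2 * v)).

Definition num_even_suffix w : {poly R} :=
  ((-1) ^+ (r + w + 1) * V r)%:P *
  (if (w <= r)%N then continuant g (2 * w - 1) * Ktail
   else continuant g (2 * r - 1) * K (2 * w - 1) (2 * k + 2 - 2 * w)).

Lemma num_odd_prefix_step v : (v < k)%N ->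
  num_odd_prefix v + num_odd v.+1 = num_odd_prefix v.+1.
Proof.
move=> Hv; rewrite /num_odd_prefix /num_odd.
have -> : (r + v.+1 + 1 = (r + v + 1).+1)%N by lia.
have E1 : (2 * v.+1 - 1 = (2 * v).+1)%N by lia.
have E2 : (2 * v.+1 = (2 * v).+2)%N by lia.
rewrite exprS E1 E2; case: (ltngtP v.+1 r) => Hvr.
- by rewrite continuantSS Qcoef_even; ring.
- have -> : (2 * k + 2 - (2 * v).+2 = (2 * k - 2 * v - 1).+1)%N by lia.
  have -> : (2 * k + 1 - 2 * v = (2 * k - 2 * v - 1).+2)%N by lia.
  have -> : (2 * k + 1 - (2 * v).+2 = 2 * k - 2 * v - 1)%N by lia.
  by rewrite continuant_shift_first Qcoef_even; ring.
- (* v.+1 = r: the prefix sum passes the diagonal term V_r D *)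
  rewrite -Hvr E1 E2.
  have -> : (2 * k + 2 - (2 * v).+2 = (2 * k - 2 * v - 1).+1)%N by lia.
  have -> : (2 * k + 1 - (2 * v).+2 = 2 * k - 2 * v - 1)%N by lia.
  have -> : (2 * k).+1 = ((2 * v).+1 + (2 * k - 2 * v - 1)).+1 by lia.
  have -> : (-1) ^+ (v.+1 + v + 1) = 1 :> R.
    by rewrite -signr_odd (_ : odd _ = false) //; lia.
  by rewrite continuant_split continuantSS Qcoef_even; ring.
Qed.

Lemma num_even_suffix_step u : (u < k)%N ->
  num_even u.+1 + num_even_suffix u.+2 = num_even_suffix u.+1.
Proof.
move=> Hu; rewrite /num_even_suffix /num_even.
have -> : (r + u.+2 + 1 = (r + u.+1 + 1).+1)%N by lia.
have -> : (2 * u.+1 - 1 = (2 * u).+1)%N by lia.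
have -> : (2 * u.+2 - 1 = (2 * u).+3)%N by lia.
have -> : (2 * u.+1 = (2 * u).+2)%N by lia.
rewrite exprS; case: (ltngtP u.+1 r) => Hur.
- by rewrite [continuant g (2 * u).+3]continuantSS Qcoef_odd; ring.
- have -> : (2 * k + 2 - (2 * u).+2 = (2 * k - 2 * u - 2).+2)%N by lia.
  have -> : (2 * k + 2 - 2 * u.+2 = 2 * k - 2 * u - 2)%N by lia.
  have -> : ((2 * k - (2 * u).+2).+1 = (2 * k - 2 * u - 2).+1)%N by lia.
  by rewrite [K (2 * u).+1 _]continuant_shift_first Qcoef_odd; ring.
- have -> : (2 * r - 1 = (2 * u).+1)%N by lia.
  rewrite -Hur.
  have -> : (2 * k + 2 - 2 * u.+1 = (2 * k - 2 * u - 2).+2)%N by lia.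
  have -> : (2 * k + 2 - 2 * u.+2 = 2 * k - 2 * u - 2)%N by lia.
  have -> : ((2 * k - (2 * u).+2).+1 = (2 * k - 2 * u - 2).+1)%N by lia.
  by rewrite [K (2 * u).+1 _]continuant_shift_first Qcoef_odd; ring.
Qed.


(* Each numerator factors through a partial sum of the other family; these
   are the transfer equations satisfied by the numerators. *)
Lemma num_even_factor v : (v <= k)%N -> num_even v = (A v)%:P * 'X * num_odd_prefix v.
Proof.
move=> Hv; rewrite /num_even /num_odd_prefix leqNgt.
have -> : ((2 * k - 2 * v).+1 = 2 * k + 1 - 2 * v)%N by lia.
by case: (v < r)%N => /=; ring.
Qed.

Lemma num_odd_factor w :
  num_odd w = (if w == r then (V r)%:P * D else 0) + (V w)%:P * 'X * num_even_suffix w.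
Proof.
rewrite /num_odd /num_even_suffix; case: (ltngtP r w) => [Hrw|Hrw|<-].
- by rewrite add0r; ring.
- by rewrite add0r; ring.
- have -> : (-1) ^+ (r + r + 1) = -1 :> R.
    by rewrite -signr_odd (_ : odd _ = true) //; lia.
  ring.
Qed.

Lemma num_odd_prefix_sum v : (v <= k)%N ->
  \sum_(1 <= u < v.+1) num_odd u = num_odd_prefix v.
Proof.
elim: v => [_|v IH Hv].
  have r_gt0 : (0 < r)%N by lia.
  by rewrite big_nil /num_odd_prefix muln0 r_gt0 /= mul0r mulr0.
by rewrite big_nat_recr //= IH ?num_odd_prefix_step //; lia.
Qed.

Lemma num_even_suffix_sum w : (1 <= w <= k.+1)%N ->
  \sum_(w <= v < k.+1) num_even v = num_even_suffix w.
Proof.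
move Ej : (k.+1 - w)%N => j; elim: j w Ej => [|j IH] [|u] Ej Hw //.
  have -> : u = k by lia.
  have k_lt_r : (k.+1 <= r)%N = false by lia.
  rewrite big_geq // /num_even_suffix k_lt_r.
  have -> : (2 * k + 2 - 2 * k.+1 = 0)%N by lia.
  by rewrite /= !mulr0.
rewrite big_ltn; last by lia.
by rewrite IH ?num_even_suffix_step //; lia.
Qed.

End Numerators.

Section TupleRcons.
Variable T : finType.

Definition tuple_rcons n (p : n.-tuple T * T) : n.+1.-tuple T :=
  [tuple of rcons p.1 p.2].

Definition tuple_unrcons n (u : n.+1.-tuple T) : n.-tuple T * T :=
  ([tuple of belast (thead u) (behead u)], last (thead u) (behead u)).

Lemma tuple_unrconsK n : cancel (@tuple_unrcons n) (@tuple_rcons n).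
Proof. by move=> u; apply: val_inj; rewrite /= -lastI {3}(tuple_eta u). Qed.

Lemma tuple_rconsK n : cancel (@tuple_rcons n) (@tuple_unrcons n).
Proof.
move=> [t x]; have := tuple_unrconsK (tuple_rcons (t, x)).
case: (tuple_unrcons _) => t' x' /(congr1 val) /rcons_inj [Et ->].
by congr pair; apply: val_inj.
Qed.

Lemma sum_tuple_rcons (R : nmodType) n (F : n.+1.-tuple T -> R) :
  \sum_(u : n.+1.-tuple T) F u
  = \sum_(t : n.-tuple T) \sum_(x : T) F (tuple_rcons (t, x)).
Proof.
rewrite (reindex (@tuple_rcons n)) /=; last first.
  by exists (@tuple_unrcons n) => ? _; [apply: tuple_rconsK | apply: tuple_unrconsK].
by rewrite pair_big.
Qed.

End TupleRcons.

Lemma aidx_rcons (a : seq nat) y i : (1 <= i <= size a)%N ->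
  aidx (rcons a y) i = aidx a i.
Proof. by move=> Hi; rewrite /aidx nth_rcons (_ : i.-1 < size a)%N //; lia. Qed.

Lemma aidx_rcons_last (a : seq nat) y : aidx (rcons a y) (size a).+1 = y.
Proof. by rewrite /aidx nth_rcons ltnn eqxx. Qed.

Definition alt_step (n j y : nat) : bool :=
  if odd n then (j <= y)%N else (y <= j)%N.

Section AlternatingSequences.
Variable k : nat.

Lemma alt_seq_last_range r u n (a : seq nat) :
  (1 <= n)%N -> alt_seq k r u n a -> (1 <= u <= k)%N.
Proof.
move=> Hn /and5P [/eqP Ha _ /eqP <- /(all_nthP 0) Hall _].
by apply: Hall; rewrite Ha ltn_predL.
Qed.

Lemma alt_seq_last r u n (a : seq nat) :
  alt_seq k r u n a = alt_seq k r (aidx a n) n a && (aidx a n == u).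
Proof.
by rewrite /alt_seq eqxx; case: (aidx a n == u); rewrite ?andbT ?andbF ?andbA.
Qed.

Lemma alt_seq_rcons r s n (a : seq nat) y : size a = n -> (1 <= n)%N ->
  alt_seq k r s n.+1 (rcons a y) =
  [&& alt_seq k r (aidx a n) n a, (1 <= y <= k)%N, alt_step n (aidx a n) y & y == s].
Proof.
move=> <- Hn; rewrite /alt_seq size_rcons eqxx aidx_rcons_last aidx_rcons //.
rewrite all_rcons eqxx /=.
have -> : iota 1 (size a) = rcons (iota 1 (size a).-1) (size a).
  by case: (size a) Hn => // m _; rewrite -cats1 -[[:: m.+1]]/(iota (1 + m) 1) -iotaD addn1.
rewrite all_rcons aidx_rcons_last aidx_rcons; last by lia.
rewrite (@eq_in_all _ _ (fun i => if odd i then (aidx a i <= aidx a i.+1)%N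
                                 else (aidx a i.+1 <= aidx a i)%N)
                    (iota 1 (size a).-1)); last first.
  by move=> i /[!mem_iota] Hi; rewrite !aidx_rcons //; lia.
rewrite /alt_step eqxx.
by case: (_ == r); case: (_ <= y <= k)%N; case: (y == s); case: (all _ a);
   case: (if odd _ then _ else _); rewrite /= ?andbT ?andbF.
Qed.

End AlternatingSequences.

Section GeneratingFunctions.
Variable R : comNzRingType.
Variables (A V : nat -> R) (k : nat).

Definition entry_weight n y : R := if odd n then A y else V y.

Lemma wAV_rcons n (a : seq nat) y : size a = n ->
  wAV A V n.+1 (rcons a y) = wAV A V n a * entry_weight n y.
Proof.
move=> Ha; rewrite /wAV /entry_weight.
have EA m : (m <= n./2)%N -> \prod_(1 <= i < m.+1) A (aidx (rcons a y) (2 * i))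
                            = \prod_(1 <= i < m.+1) A (aidx a (2 * i)).
  by move=> Hm; apply: eq_big_nat => i Hi; rewrite aidx_rcons //; lia.
have EV m : (m <= uphalf n)%N -> \prod_(1 <= i < m.+1) V (aidx (rcons a y) (2 * i - 1))
                               = \prod_(1 <= i < m.+1) V (aidx a (2 * i - 1)).
  by move=> Hm; apply: eq_big_nat => i Hi; rewrite aidx_rcons //; lia.
have [odd_n | even_n] := boolP (odd n).
- have -> : (n.+1./2 = (n./2).+1)%N by lia.
  have -> : (uphalf n.+1 = uphalf n)%N by lia.
  rewrite big_nat_recr //= EA // EV //.
  have -> : (2 * (n./2).+1 = (size a).+1)%N by lia.
  by rewrite aidx_rcons_last; ring.
- have -> : (n.+1./2 = n./2)%N by lia.
  have -> : (uphalf n.+1 = (uphalf n).+1)%N by lia.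
  rewrite [X in _ * X]big_nat_recr //= EA // EV //.
  have -> : (2 * (uphalf n).+1 - 1 = (size a).+1)%N by lia.
  by rewrite aidx_rcons_last; ring.
Qed.

Lemma sum_GFA_last r n (P : pred nat) : (1 <= n)%N ->
  \sum_(u < k.+1 | P u) GFA A V k r u n
  = \sum_(t : n.-tuple 'I_k.+1)
      let a := map val t in
      if alt_seq k r (aidx a n) n a && P (aidx a n) then wAV A V n a else 0.
Proof.
move=> Hn; rewrite /GFA (exchange_big_dep xpredT) //=; apply: eq_bigr => t _.
set a := map val t; set j := aidx a n.
rewrite (eq_bigl (fun u : 'I_k.+1 => (P u && alt_seq k r j n a) && (u == j :> nat))); last first.
  by move=> u; rewrite alt_seq_last -/j andbA [j == _]eq_sym.
rewrite (big_ord1_cond_eq _ (fun=> wAV A V n a) (fun u => P u && alt_seq k r j n a)).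
have [alt_a|] := boolP (alt_seq k r j n a); rewrite ?andbT ?andbF //.
by rewrite ltnS; have /andP [_ ->] := alt_seq_last_range Hn alt_a.
Qed.

Lemma GFA_succ r s n : (1 <= n)%N -> (1 <= s <= k)%N ->
  GFA A V k r s n.+1
  = entry_weight n s * \sum_(u < k.+1 | alt_step n u s) GFA A V k r u n.
Proof.
move=> Hn Hs; rewrite (sum_GFA_last _ (fun u => alt_step n u s)) // mulr_sumr /GFA big_mkcond sum_tuple_rcons.
apply: eq_bigr => t _ /=; set a := map val t; set j := aidx a n.
have Ha : size a = n by rewrite size_map size_tuple.
under eq_bigr do rewrite map_rcons alt_seq_rcons // wAV_rcons //.
rewrite -big_mkcond (eq_bigl (fun x : 'I_k.+1 =>
  [&& alt_seq k r j n a, (1 <= x <= k)%N & alt_step n j x] && (x == s :> nat))); last first.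
  by move=> x; rewrite !andbA.
rewrite (big_ord1_cond_eq _ (fun x => wAV A V n a * entry_weight n x)
           (fun x => [&& alt_seq k r j n a, (1 <= x <= k)%N & alt_step n j x])).
have /andP [_ s_le_k] := Hs.
by rewrite ltnS Hs s_le_k /=; case: ifP; rewrite ?mulr0 // mulrC.
Qed.

Lemma GFA_1 r s : (1 <= r <= k)%N -> GFA A V k r s 1 = if s == r then V r else 0.
Proof.
move=> Hr; rewrite /GFA big_mkcond sum_tuple_rcons.
have single (t : 0.-tuple 'I_k.+1) : \sum_(x < k.+1)
    (if alt_seq k r s 1 (map val (tuple_rcons (t, x)))
     then wAV A V 1 (map val (tuple_rcons (t, x))) else 0)
  = if s == r then V r else 0.
  rewrite (tuple0 t) /= -big_mkcond.
  rewrite (eq_bigl (fun x : 'I_k.+1 => ((s == r) && (1 <= x <= k)%N) && (x == r :> nat))).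
    rewrite (big_ord1_cond_eq _ (fun x => wAV A V 1 [:: x])
               (fun x => (s == r) && (1 <= x <= k)%N)) ltnS Hr andbT.
    have /andP [_ ->] := Hr; rewrite andbC.
    by case: (s == r); rewrite //= /wAV big_geq // big_nat1 mul1r.
  move=> x; rewrite /alt_seq /aidx /= andbT.
  case: eqP => [->|_]; last by rewrite andbF.
  by rewrite [r == s]eq_sym /= !andbT.
under eq_bigr do rewrite single.
by rewrite sumr_const card_tuple expn0 mulr1n.
Qed.

Lemma GFA_end0 r n : (1 <= n)%N -> GFA A V k r 0 n = 0.
Proof.
by move=> Hn; rewrite /GFA big1 // => t /(alt_seq_last_range Hn).
Qed.

End GeneratingFunctions.

Section PowerSeriesProduct.
Variable R : comNzRingType.

Definition conv (P : {poly R}) (f : nat -> R) (m : nat) : R :=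
  \sum_(i < m.+1) P`_i * f (m - i)%N.

Lemma conv_transfer (P : {poly R}) (c : R) (f : nat -> R) (fv : nat -> nat -> R)
    (lo hi : nat) :
  (forall m, f m.+1 = c * \sum_(lo <= v < hi) fv v m) ->
  forall m, conv P f m.+1
            = c * \sum_(lo <= v < hi) conv P (fv v) m + P`_m.+1 * f 0%N.
Proof.
move=> f_succ m; rewrite /conv big_ord_recr /= subnn; congr (_ + _).
have term_succ (i : 'I_m.+1) : P`_i * f (m.+1 - i)%N
    = \sum_(lo <= v < hi) c * (P`_i * fv v (m - i)%N).
  rewrite subSn; last by rewrite -ltnS.
  by rewrite f_succ mulrCA !mulr_sumr.
rewrite (eq_bigr _ (fun i _ => term_succ i)) exchange_big mulr_sumr.
by apply: eq_bigr => v _; rewrite mulr_sumr.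
Qed.

Lemma coefCXM (c : R) (p : {poly R}) m :
  (c%:P * 'X * p)`_m = if m is m'.+1 then c * p`_m' else 0.
Proof. by rewrite -mulrA coefCM coefXM; case: m => [|m] /=; rewrite ?mulr0. Qed.

End PowerSeriesProduct.

Section TransferEquations.
Variable R : comNzRingType.
Variables (A V : nat -> R) (k r : nat).
Hypothesis Hr : (1 <= r <= k)%N.

Definition series_odd u m : R := if ~~ odd m then GFA A V k r u m.+1 else 0.
Definition series_even u m : R := if odd m then GFA A V k r u m.+1 else 0.

Lemma series_odd_succ u m : (1 <= u <= k)%N ->
  series_odd u m.+1 = V u * \sum_(u <= v < k.+1) series_even v m.
Proof.
move=> Hu; rewrite /series_odd /series_even /= negbK.
have [odd_m | even_m] := boolP (odd m); last by rewrite big1 ?mulr0.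
rewrite GFA_succ // /entry_weight /alt_step oddS odd_m /= big_geq_mkord.
by congr (_ * _); apply: eq_bigl.
Qed.

Lemma series_even_succ u m : (1 <= u <= k)%N ->
  series_even u m.+1 = A u * \sum_(1 <= v < u.+1) series_odd v m.
Proof.
move=> Hu; rewrite /series_odd /series_even /=.
have [odd_m | even_m] := boolP (odd m); first by rewrite big1 ?mulr0.
rewrite GFA_succ // /entry_weight /alt_step oddS (negbTE even_m) /=.
have drop_end0 (F : nat -> R) : \sum_(v < k.+1 | (v <= u)%N) F v = F 0%N + \sum_(1 <= v < u.+1) F v.
  have u_lt_k1 : (u.+1 <= k.+1)%N by lia.
  by rewrite -(big_mkord (fun v => v <= u)%N) -(big_nat_widen 0 _ _ xpredT _ u_lt_k1) big_ltn.
by rewrite (drop_end0 (fun v => GFA A V k r v m.+1)) GFA_end0 // add0r.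
Qed.

Local Notation D := (continuant (Qcoef A V) (2 * k).+1).

Lemma series_numerators m : forall u, (1 <= u <= k)%N ->
  conv D (series_odd u) m = (num_odd A V k r u)`_m
  /\ conv D (series_even u) m = (num_even A V k r u)`_m.
Proof.
have series_odd0 u : series_odd u 0 = if u == r then V r else 0.
  by rewrite /series_odd GFA_1.
elim: m => [|m IH] u Hu.
  rewrite /conv !big_ord1 series_odd0 (num_odd_factor _ _ Hr) (num_even_factor _ _ Hr); last by lia.
  rewrite coefD !coefCXM addr0 /series_even /= mulr0; split=> //.
  by case: (u == r); rewrite ?coefCM ?coef0 ?mulr0 // mulrC.
split.
- rewrite (conv_transfer _ (fun m => series_odd_succ m Hu)) series_odd0.
  rewrite (num_odd_factor _ _ Hr) coefD coefCXM -(num_even_suffix_sum _ _ Hr); last by lia.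
  rewrite coef_sum (@eq_big_nat _ _ _ _ _ _ (fun v => (num_even A V k r v)`_m)).
    by rewrite addrC; case: (u == r); rewrite ?coefCM ?coef0 ?mulr0 // mulrC.
  by move=> v Hv; rewrite (proj2 (IH v _)) //; lia.
- rewrite (conv_transfer _ (fun m => series_even_succ m Hu)) /series_even /= mulr0 addr0.
  rewrite (num_even_factor _ _ Hr) ?coefCXM -?(num_odd_prefix_sum _ _ Hr); try lia.
  rewrite coef_sum (@eq_big_nat _ _ _ _ _ _ (fun v => (num_odd A V k r v)`_m)) //.
  by move=> v Hv; rewrite (proj1 (IH v _)) //; lia.
Qed.

End TransferEquations.

Theorem theorem28 (R : comRingType) (A V : nat -> R) (k r s : nat) :
  (1 <= r <= k)%N -> (1 <= s <= k)%N ->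
  ps_eq_div
    (fun m => if ~~ odd m then GFA A V k r s m.+1 else 0)
    (if (r < s)%N then
       ((-1) ^+ (r + s + 1) * V r * V s)%:P * 'X * Qpoly A V (2 * r - 2)
         * TRQ (s - 1) (k - s + 1) (2 * k + 1 - 2 * s) A V
     else if r == s then
       (V r)%:P * Qpoly A V (2 * k)
       - (V r ^+ 2)%:P * 'X * Qpoly A V (2 * r - 2)
         * TRQ (r - 1) (k - r + 1) (2 * k + 1 - 2 * r) A V
     else
       ((-1) ^+ (r + s + 1) * V r * V s)%:P * 'X * Qpoly A V (2 * s - 2)
         * TRQ (r - 1) (k - r + 1) (2 * k + 1 - 2 * r) A V)
    (Qpoly A V (2 * k))
  /\
  ps_eq_div
    (fun m => if odd m then GFA A V k r s m.+1 else 0)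
    (if (r <= s)%N then
       ((-1) ^+ (r + s + 1) * V r * A s)%:P * 'X * Qpoly A V (2 * r - 2)
         * TQ s (2 * k - 2 * s) A V
     else
       ((-1) ^+ (r + s + 1) * V r * A s)%:P * 'X * Qpoly A V (2 * s - 1)
         * TRQ (r - 1) (k - r + 1) (2 * k + 1 - 2 * r) A V)
    (Qpoly A V (2 * k)).
Proof.
move=> Hr Hs.
rewrite !Qpoly_continuant TQ_continuant (TRQ_continuant _ _ Hs) (TRQ_continuant _ _ Hr).
have -> : (2 * r - 2).+1 = (2 * r - 1)%N by lia.
have -> : (2 * s - 2).+1 = (2 * s - 1)%N by lia.
have -> : (2 * s - 1).+1 = (2 * s)%N by lia.
split=> m.
- exact: (proj1 (series_numerators A V Hr m Hs)).
- exact: (proj2 (series_numerators A V Hr m Hs)).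
Qed.
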